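(* Let $\varepsilon>0$ and let $k\ge2$ be even. There exist a threshold $\theta$, a sequence $Q$ of $k$ counting queries (each of sensitivity $1$), and datasets such that BinarySVT$(\cdot,Q,\theta,\lambda)$ (described below) does not satisfy $\varepsilon$-differential privacy whenever $\lambda\le\frac{k}{4\varepsilon}$.
   Context: $\mathrm{Lap}(\lambda)$ is the Laplace distribution with density $\frac{1}{2\lambda}e^{-|y|/\lambda}$. A dataset is a finite multiset of tuples; two datasets are neighboring if one is obtained by inserting one tuple into the other. A counting query $q$ maps a dataset to the number of its tuples satisfying some predicate. BinarySVT$(D,Q=(q_1,\dots,q_k),\theta,\lambda)$: draw $\hat\theta=\theta+\mathrm{Lap}(\lambda)$ once; then for $i=1,\dots,k$ draw $\hat q_i(D)=q_i(D)+\mathrm{Lap}(\lambda)$ (all noises independent) and output $o_i=1$ if $\hat q_i(D)>\hat\theta$ and $o_i=0$ otherwise. The output is $(o_1,\dots,o_k)$. An algorithm $\mathcal{A}$ is $\varepsilon$-differentially private if for all neighboring $D,D'$ and all outputs $O$, $\Pr[\mathcal{A}(D)=O]\le e^{\varepsilon}\Pr[\mathcal{A}(D')=O]$. *)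

From Stdlib Require Import Reals Lra Lia List Permutation Arith.
Import ListNotations.
Open Scope R_scope.

(* Tuples are natural numbers; a dataset is a finite multiset of tuples,
   represented as a list (up to permutation). *)
Definition dataset := list nat.

Definition count_query (P : nat -> bool) (D : dataset) : nat :=
  length (filter P D).

Definition neighboring (D D' : dataset) : Prop :=
  exists x : nat, Permutation D' (x :: D) \/ Permutation D (x :: D').

Definition lap_density (lam y : R) : R := / (2 * lam) * exp (- Rabs y / lam).

Definition lap_tail (lam x : R) : R :=
  if Rle_dec 0 x then / 2 * exp (- x / lam) else 1 - / 2 * exp (x / lam).

(* Conditional probability, given the noisy threshold t, that query value v
   produces output bit o: Pr[v + Lap(lam) > t] if o = true, else its
   complement. *)
Definition bit_prob (lam v t : R) (o : bool) : R :=
  if o then lap_tail lam (t - v) else 1 - lap_tail lam (t - v).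

(* Integrand in the noisy threshold t = theta + Lap(lam): density of the
   noisy threshold times the (conditionally independent) output-bit
   probabilities. *)
Definition svt_integrand (D : dataset) (Q : list (nat -> bool)) (theta lam : R)
  (O : list bool) (t : R) : R :=
  if Nat.eqb (length O) (length Q) then
    lap_density lam (t - theta) *
    fold_right Rmult 1
      (map (fun qo : (nat -> bool) * bool =>
              bit_prob lam (INR (count_query (fst qo) D)) t (snd qo))
           (combine Q O))
  else 0.

Definition improper_integral (f : R -> R) (I : R) : Prop :=
  (forall a b : R, inhabited (Riemann_integrable f a b)) /\
  forall e : R, 0 < e -> exists M : R,
    forall (a b : R) (pr : Riemann_integrable f a b),
      a <= - M -> M <= b -> Rabs (RiemannInt pr - I) < e.

(* svt_prob D Q theta lam O p : Pr[BinarySVT(D,Q,theta,lam) = O] = p. *)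
Definition svt_prob (D : dataset) (Q : list (nat -> bool)) (theta lam : R)
  (O : list bool) (p : R) : Prop :=
  improper_integral (svt_integrand D Q theta lam O) p.

(* Take threshold 1, m queries counting every tuple followed by m queries
   counting none, D = {x}, D' = {x, x} and the output 0^m 1^m.  Given the noisy
   threshold t the output bits are independent, so the two output probabilities
   are the integrals of w_v(t) = p(t - 1) F(t - v)^m F(-t)^m for v = 1, 2, where
   p and F are the Laplace density and CDF.  For t <= 1 both F(t - 1) and
   F(t - 2) lie on the exponential branch of F, so w_1 = e^(m/l) w_2 >= e^(2 eps) w_2
   once l <= k / (4 eps); for t >= 1 still w_1 >= w_2; and w_2 is symmetric
   about 1.  Pairing t with 2 - t gives
   int (w_1 - e^eps w_2) >= (e^eps - 1)^2 int_(t <= 1) w_2 > 0. *)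

From Stdlib Require Import Reals Lra Lia List Permutation FunctionalExtensionality.
From Coquelicot Require Import Coquelicot.
Import ListNotations.
Open Scope R_scope.

Lemma exp_le_compat x y : x <= y -> exp x <= exp y.
Proof.
  intros [Hlt | ->]; [now left; apply exp_increasing | apply Rle_refl].
Qed.

Lemma ex_RInt_continuity (f : R -> R) a b :
  (forall x, continuity_pt f x) -> ex_RInt f a b.
Proof.
  intros Hf; apply (ex_RInt_continuous (V := R_CompleteNormedModule)).
  intros z _; apply continuity_pt_filterlim, Hf.
Qed.

Lemma RInt_le_RInt_subinterval (f : R -> R) a a' b' b :
  (forall x, continuity_pt f x) -> (forall x, a <= x <= b -> 0 <= f x) ->
  a <= a' -> a' <= b' -> b' <= b -> RInt f a' b' <= RInt f a b.
Proof.
  intros Hf Hpos Ha Hab Hb.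
  assert (Hex : forall x y, ex_RInt f x y) by (intros; apply ex_RInt_continuity, Hf).
  rewrite <- (RInt_Chasles f a a' b), <- (RInt_Chasles f a' b' b) by auto.
  assert (0 <= RInt f a a') by (apply RInt_ge_0; auto; intros; apply Hpos; lra).
  assert (0 <= RInt f b' b) by (apply RInt_ge_0; auto; intros; apply Hpos; lra).
  unfold plus; simpl; lra.
Qed.

Lemma RInt_reflect_window (f : R -> R) c N :
  (forall x, continuity_pt f x) ->
  RInt f (c - N) (c + N) = RInt (fun t => f t + f (2 * c - t)) (c - N) c.
Proof.
  intros Hf.
  assert (Hex : forall g a b, (forall x, continuity_pt g x) -> ex_RInt g a b)
    by (intros; apply ex_RInt_continuity; auto).
  assert (Hf_mirror : forall x, continuity_pt (fun t => f (2 * c - t)) x)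
    by (intros; reg; apply Hf).
  assert (Hmirror : RInt f c (c + N) = RInt (fun t => f (2 * c - t)) (c - N) c).
  { pose proof (RInt_comp_lin f (-1) (2 * c) (c - N) c (Hex f _ _ Hf)) as Hlin.
    replace (-1 * (c - N) + 2 * c) with (c + N) in Hlin by ring.
    replace (-1 * c + 2 * c) with c in Hlin by ring.
    rewrite <- (opp_RInt_swap f), <- Hlin by (apply Hex; auto).
    rewrite (RInt_ext _ (fun t => opp (f (2 * c - t)))).
    2: { intros t _; unfold scal, opp; simpl; unfold mult; simpl.
         replace (-1 * t + 2 * c) with (2 * c - t) by ring; ring. }
    rewrite (RInt_opp (V := R_CompleteNormedModule)) by (apply Hex; auto).
    unfold opp; simpl; ring. }
  rewrite <- (RInt_Chasles f (c - N) c (c + N)), Hmirror by (apply Hex; auto).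
  rewrite (RInt_plus (V := R_CompleteNormedModule)) by (apply Hex; auto).
  reflexivity.
Qed.

(* With a nonnegative integrand the integrals over the windows [c - n, c + n]
   increase, and every [a, b] around [c - n, c + n] is squeezed between two of
   them. *)
Lemma improper_integral_nonneg (f : R -> R) c B :
  (forall x, continuity_pt f x) -> (forall x, 0 <= f x) ->
  (forall n : nat, RInt f (c - INR n) (c + INR n) <= B) ->
  exists I, improper_integral f I.
Proof.
  intros Hf Hpos HB.
  set (u n := RInt f (c - INR n) (c + INR n)).
  assert (Hu_le : forall n n', (n <= n')%nat -> u n <= u n').
  { intros n n' Hn; apply le_INR in Hn; pose proof (pos_INR n).
    apply RInt_le_RInt_subinterval; auto; lra. }
  destruct (growing_cv u) as [I HI].
  { intros n; apply Hu_le; lia. }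
  { exists B; intros y [n ->]; apply HB. }
  exists I; split.
  { intros a b; constructor; apply ex_RInt_Reals_0, ex_RInt_continuity, Hf. }
  intros e He.
  destruct (HI e He) as [n0 Hn0]; specialize (Hn0 n0 (Nat.le_refl n0)).
  unfold R_dist in Hn0.
  exists (Rabs c + INR n0); intros a b pr Ha Hb.
  rewrite <- RInt_Reals.
  destruct (INR_unbounded (Rabs c + Rmax (- a) b)) as [n1 Hn1].
  pose proof (Rle_abs c); pose proof (Rle_abs (- c)); rewrite Rabs_Ropp in *.
  pose proof (Rmax_l (- a) b); pose proof (Rmax_r (- a) b); pose proof (pos_INR n0).
  assert (Hlow : u n0 <= RInt f a b)
    by (apply RInt_le_RInt_subinterval; auto; lra).
  assert (Hup : RInt f a b <= u n1)
    by (apply RInt_le_RInt_subinterval; auto; lra).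
  pose proof (growing_ineq u I ltac:(intros n; apply Hu_le; lia) HI n1).
  apply Rabs_def2 in Hn0 as [? ?]; apply Rabs_def1; lra.
Qed.

Lemma improper_integral_minus_scal (f g : R -> R) E p q :
  improper_integral f p -> improper_integral g q ->
  improper_integral (fun t => f t - E * g t) (p - E * q).
Proof.
  intros [Hfi Hf] [Hgi Hg].
  assert (Hfex : forall a b, ex_RInt f a b)
    by (intros a b; destruct (Hfi a b) as [pr]; exact (ex_RInt_Reals_1 _ _ _ pr)).
  assert (Hgex : forall a b, ex_RInt g a b)
    by (intros a b; destruct (Hgi a b) as [pr]; exact (ex_RInt_Reals_1 _ _ _ pr)).
  assert (Hlin : forall a b, RInt (fun t => f t - E * g t) a b = RInt f a b - E * RInt g a b).
  { intros a b.
    rewrite (RInt_minus (V := R_CompleteNormedModule) f (fun t => E * g t))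
      by (auto; apply (ex_RInt_scal (V := R_CompleteNormedModule)); auto).
    rewrite (RInt_scal (V := R_CompleteNormedModule) g) by auto.
    reflexivity. }
  split.
  { intros a b; constructor; apply ex_RInt_Reals_0.
    apply (ex_RInt_minus (V := R_CompleteNormedModule)); auto.
    apply (ex_RInt_scal (V := R_CompleteNormedModule)); auto. }
  intros e He.
  set (e' := e / (1 + Rabs E)).
  assert (He' : 0 < e') by (unfold e'; pose proof (Rabs_pos E); apply Rdiv_lt_0_compat; lra).
  assert (Hee' : e = e' + Rabs E * e') by (unfold e'; pose proof (Rabs_pos E); field; lra).
  destruct (Hf e' He') as [Mf HMf]; destruct (Hg e' He') as [Mg HMg].
  exists (Rmax Mf Mg); intros a b pr Ha Hb.
  pose proof (Rmax_l Mf Mg); pose proof (Rmax_r Mf Mg).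
  destruct (Hfi a b) as [prf]; destruct (Hgi a b) as [prg].
  specialize (HMf a b prf ltac:(lra) ltac:(lra)).
  specialize (HMg a b prg ltac:(lra) ltac:(lra)).
  rewrite <- RInt_Reals, Hlin.
  rewrite <- RInt_Reals in HMf, HMg.
  replace (RInt f a b - E * RInt g a b - (p - E * q))
    with ((RInt f a b - p) - E * (RInt g a b - q)) by ring.
  eapply Rle_lt_trans; [apply Rabs_triang |].
  rewrite Rabs_Ropp, Rabs_mult.
  pose proof (Rabs_pos E).
  assert (Rabs E * Rabs (RInt g a b - q) <= Rabs E * e')
    by (apply Rmult_le_compat_l; lra).
  lra.
Qed.

Lemma improper_integral_ge (f : R -> R) I c d N0 :
  improper_integral f I ->
  (forall N, N0 <= N -> d <= RInt f (c - N) (c + N)) -> d <= I.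
Proof.
  intros [Hfi Hf] Hd.
  destruct (Rle_or_lt d I) as [? | Hlt]; [assumption | exfalso].
  destruct (Hf (d - I) ltac:(lra)) as [M HM].
  set (N := Rabs N0 + Rabs c + Rabs M).
  pose proof (Rle_abs N0); pose proof (Rabs_pos N0).
  pose proof (Rle_abs c); pose proof (Rle_abs (- c)).
  pose proof (Rle_abs M); pose proof (Rle_abs (- M)); rewrite !Rabs_Ropp in *.
  destruct (Hfi (c - N) (c + N)) as [pr].
  specialize (HM _ _ pr ltac:(unfold N; lra) ltac:(unfold N; lra)).
  rewrite <- RInt_Reals in HM.
  specialize (Hd N ltac:(unfold N; lra)).
  apply Rabs_def2 in HM; lra.
Qed.

(* Pr[Lap(l) <= s], written without a case split so that continuity is
   immediate: it is [/2 exp(s/l)] for [s <= 0] and [1 - /2 exp(-s/l)] for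
   [s >= 0]. *)
Definition lap_cdf (l s : R) : R :=
  / 2 * exp (- Rabs s / l) + 1 - exp (- (s + Rabs s) / (2 * l)).

Section Laplace.

Variable l : R.
Hypothesis l_gt0 : 0 < l.

Lemma lap_cdf_left s : s <= 0 -> lap_cdf l s = / 2 * exp (s / l).
Proof.
  intros Hs; unfold lap_cdf; rewrite Rabs_left1 by lra.
  replace (- (s + - s) / (2 * l)) with 0 by (field; lra).
  replace (- - s / l) with (s / l) by (field; lra).
  rewrite exp_0; ring.
Qed.

Lemma lap_cdf_right s : 0 <= s -> lap_cdf l s = 1 - / 2 * exp (- s / l).
Proof.
  intros Hs; unfold lap_cdf; rewrite Rabs_pos_eq by lra.
  replace (- (s + s) / (2 * l)) with (- s / l) by (field; lra).
  field.
Qed.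

Lemma lap_cdf_opp s : lap_cdf l (- s) = 1 - lap_cdf l s.
Proof.
  destruct (Rle_or_lt s 0).
  - rewrite lap_cdf_right, lap_cdf_left by lra.
    replace (- - s / l) with (s / l) by (field; lra); field.
  - rewrite lap_cdf_left, lap_cdf_right by lra; field.
Qed.

Lemma lap_tail_cdf x : lap_tail l x = lap_cdf l (- x).
Proof.
  unfold lap_tail; destruct (Rle_dec 0 x).
  - rewrite lap_cdf_left by lra; reflexivity.
  - rewrite lap_cdf_right by lra.
    replace (- - x / l) with (x / l) by (field; lra); reflexivity.
Qed.

Lemma bit_prob_false v t : bit_prob l v t false = lap_cdf l (t - v).
Proof.
  unfold bit_prob; rewrite lap_tail_cdf, lap_cdf_opp; ring.
Qed.

Lemma bit_prob_true v t : bit_prob l v t true = lap_cdf l (v - t).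
Proof. unfold bit_prob; rewrite lap_tail_cdf, Ropp_minus_distr; reflexivity. Qed.

Lemma lap_cdf_bounds s : 0 < lap_cdf l s <= 1.
Proof.
  assert (Hdiv : forall x, x <= 0 -> exp (x / l) <= 1).
  { intros x Hx; rewrite <- exp_0; apply exp_le_compat.
    unfold Rdiv; apply Rmult_le_0_r; [lra | left; apply Rinv_0_lt_compat, l_gt0]. }
  destruct (Rle_or_lt s 0).
  - rewrite lap_cdf_left by lra.
    pose proof (exp_pos (s / l)); pose proof (Hdiv s H); lra.
  - rewrite lap_cdf_right by lra.
    pose proof (exp_pos (- s / l)); pose proof (Hdiv (- s) ltac:(lra)); lra.
Qed.

Lemma lap_cdf_le x y : x <= y -> lap_cdf l x <= lap_cdf l y.
Proof.
  intros Hxy.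
  assert (Hmono : forall a b, a <= b -> exp (a / l) <= exp (b / l)).
  { intros a b Hab; apply exp_le_compat.
    unfold Rdiv; apply Rmult_le_compat_r; [left; apply Rinv_0_lt_compat, l_gt0 | lra]. }
  destruct (Rle_or_lt y 0), (Rle_or_lt x 0).
  - rewrite !lap_cdf_left by lra; pose proof (Hmono x y Hxy); lra.
  - lra.
  - rewrite lap_cdf_left, lap_cdf_right by lra.
    pose proof (Hmono x 0 ltac:(lra)); pose proof (Hmono (- y) 0 ltac:(lra)).
    replace (0 / l) with 0 in * by (field; lra); rewrite exp_0 in *; lra.
  - rewrite !lap_cdf_right by lra; pose proof (Hmono (- y) (- x) ltac:(lra)); lra.
Qed.

Lemma lap_cdf_shift s d : s <= 0 -> 0 <= d ->
  lap_cdf l s = exp (d / l) * lap_cdf l (s - d).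
Proof.
  intros Hs Hd; rewrite !lap_cdf_left by lra.
  replace (s / l) with (d / l + (s - d) / l) by (field; lra).
  rewrite exp_plus; ring.
Qed.

Lemma continuity_pt_lap_cdf s : continuity_pt (lap_cdf l) s.
Proof. unfold lap_cdf; reg. Qed.

Lemma lap_density_pos y : 0 < lap_density l y.
Proof. apply Rmult_lt_0_compat; [apply Rinv_0_lt_compat; lra | apply exp_pos]. Qed.

Lemma RInt_lap_density_window c N : 0 <= N ->
  RInt (fun t => lap_density l (t - c)) (c - N) (c + N) = 1 - exp (- N / l).
Proof.
  intros HN.
  assert (Hpair : forall t, t < c ->
            lap_density l (t - c) + lap_density l (2 * c - t - c) = / l * exp ((t - c) / l)).
  { intros t Ht; unfold lap_density.
    replace (Rabs (t - c)) with (c - t) by (rewrite Rabs_left; lra).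
    replace (Rabs (2 * c - t - c)) with (c - t) by (rewrite Rabs_right; lra).
    replace (- (c - t) / l) with ((t - c) / l) by (field; lra).
    field; lra. }
  rewrite RInt_reflect_window by (intros; unfold lap_density; reg).
  rewrite (RInt_ext _ (fun t => / l * exp ((t - c) / l)))
    by (intros t Ht; rewrite Rmin_left, Rmax_right in Ht by lra; apply Hpair; lra).
  assert (Hval : minus (exp ((c - c) / l)) (exp ((c - N - c) / l)) = 1 - exp (- N / l)).
  { unfold minus, plus, opp; simpl.
    replace ((c - c) / l) with 0 by (field; lra).
    replace ((c - N - c) / l) with (- N / l) by (field; lra).
    rewrite exp_0; ring. }
  apply is_RInt_unique; rewrite <- Hval.
  apply (is_RInt_derive (V := R_CompleteNormedModule) (fun t => exp ((t - c) / l))).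
  - intros t _; auto_derive; [exact I | unfold Rminus, Rdiv; ring].
  - intros t _; apply continuity_pt_filterlim; reg.
Qed.

End Laplace.

Lemma combine_app {A B : Type} (l1 l3 : list A) (l2 l4 : list B) :
  length l1 = length l2 -> combine (l1 ++ l3) (l2 ++ l4) = combine l1 l2 ++ combine l3 l4.
Proof.
  revert l2; induction l1 as [| a l1 IH]; intros [| b l2] Hlen; try discriminate.
  - reflexivity.
  - simpl; rewrite IH by (simpl in Hlen; lia); reflexivity.
Qed.

Lemma combine_repeat {A B : Type} (a : A) (b : B) m :
  combine (repeat a m) (repeat b m) = repeat (a, b) m.
Proof. induction m as [| m IH]; simpl; [reflexivity | rewrite IH; reflexivity]. Qed.

Lemma fold_right_Rmult_repeat c x m : fold_right Rmult x (repeat c m) = c ^ m * x.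
Proof. induction m as [| m IH]; simpl; [ring | rewrite IH; ring]. Qed.

Definition witness_integrand (l : R) (m : nat) (v t : R) : R :=
  lap_density l (t - 1) * (lap_cdf l (t - v) ^ m * lap_cdf l (- t) ^ m).

Lemma svt_integrand_witness (D : dataset) l m : 0 < l ->
  svt_integrand D (repeat (fun _ => true) m ++ repeat (fun _ => false) m) 1 l
    (repeat false m ++ repeat true m)
  = witness_integrand l m (INR (length D)).
Proof.
  intros Hl; apply functional_extensionality; intros t.
  unfold svt_integrand; rewrite !length_app, !repeat_length, Nat.eqb_refl.
  rewrite combine_app by (rewrite !repeat_length; reflexivity).
  rewrite !combine_repeat, map_app, !map_repeat, fold_right_app, !fold_right_Rmult_repeat.
  simpl fst; simpl snd; rewrite (bit_prob_false l Hl), (bit_prob_true l Hl).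
  unfold count_query; rewrite List.filter_true, filter_false.
  change (INR (length [])) with 0; rewrite Rminus_0_l.
  unfold witness_integrand; ring.
Qed.

Section WitnessIntegrand.

Variables (l : R) (m : nat).
Hypothesis l_gt0 : 0 < l.

Notation w := (witness_integrand l m).

Lemma continuity_pt_witness_integrand v t : continuity_pt (w v) t.
Proof.
  unfold witness_integrand, lap_density; reg; apply continuity_pt_lap_cdf.
Qed.

Lemma witness_integrand_bounds v t : 0 < w v t <= lap_density l (t - 1).
Proof.
  unfold witness_integrand.
  pose proof (lap_density_pos l l_gt0 (t - 1)).
  assert (Hpow : forall s, 0 < lap_cdf l s ^ m <= 1).
  { intros s; destruct (lap_cdf_bounds l l_gt0 s).
    split; [now apply pow_lt | rewrite <- (pow1 m); apply pow_incr; lra]. }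
  destruct (Hpow (t - v)), (Hpow (- t)).
  split; [apply Rmult_lt_0_compat; [| apply Rmult_lt_0_compat]; assumption |].
  rewrite <- (Rmult_1_r (lap_density l (t - 1))) at 2.
  apply Rmult_le_compat_l; [lra |].
  rewrite <- (Rmult_1_r 1); apply Rmult_le_compat; lra.
Qed.

Lemma witness_integrand_le v v' t : v <= v' -> w v' t <= w v t.
Proof.
  intros Hv; unfold witness_integrand.
  pose proof (lap_density_pos l l_gt0 (t - 1)).
  apply Rmult_le_compat_l; [lra |]; apply Rmult_le_compat_r.
  - apply pow_le; left; apply lap_cdf_bounds, l_gt0.
  - apply pow_incr; split; [left; apply lap_cdf_bounds, l_gt0 | apply lap_cdf_le; lra].
Qed.

Lemma witness_integrand_shift t : t <= 1 -> w 1 t = exp (INR m / l) * w 2 t.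
Proof.
  intros Ht; unfold witness_integrand.
  rewrite (lap_cdf_shift l l_gt0 (t - 1) 1) by lra.
  replace (t - 1 - 1) with (t - 2) by ring.
  rewrite Rpow_mult_distr, <- Rpower_pow by apply exp_pos.
  unfold Rpower; rewrite ln_exp.
  replace (INR m * (1 / l)) with (INR m / l) by (field; lra); ring.
Qed.

Lemma witness_integrand_reflect t : w 2 (2 - t) = w 2 t.
Proof.
  unfold witness_integrand, lap_density.
  replace (2 - t - 1) with (- (t - 1)) by ring; rewrite Rabs_Ropp.
  replace (2 - t - 2) with (- t) by ring; replace (- (2 - t)) with (t - 2) by ring.
  ring.
Qed.

Lemma improper_integral_witness v : exists I, improper_integral (w v) I.
Proof.
  apply (improper_integral_nonneg _ 1 1).
  - apply continuity_pt_witness_integrand.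
  - intros t; left; apply witness_integrand_bounds.
  - intros n.
    eapply Rle_trans.
    + apply (RInt_le _ (fun t => lap_density l (t - 1))).
      * pose proof (pos_INR n); lra.
      * apply ex_RInt_continuity, continuity_pt_witness_integrand.
      * apply ex_RInt_continuity; intros; unfold lap_density; reg.
      * intros t _; apply witness_integrand_bounds.
    + rewrite (RInt_lap_density_window l l_gt0) by apply pos_INR.
      pose proof (exp_pos (- INR n / l)); lra.
Qed.

Section Gap.

Variable eps : R.
Hypothesis eps_gt0 : 0 < eps.
Hypothesis budget : 2 * eps <= INR m / l.

Lemma witness_pair_lower t : t <= 1 ->
  (exp eps - 1) ^ 2 * w 2 t <=
  (w 1 t - exp eps * w 2 t) + (w 1 (2 - t) - exp eps * w 2 (2 - t)).
Proof.
  intros Ht.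
  rewrite (witness_integrand_shift t Ht), witness_integrand_reflect.
  pose proof (witness_integrand_le 1 2 (2 - t) ltac:(lra)) as Hright.
  rewrite witness_integrand_reflect in Hright.
  destruct (witness_integrand_bounds 2 t) as [Hpos _].
  assert (Hexp : exp eps * exp eps <= exp (INR m / l))
    by (rewrite <- exp_plus; apply exp_le_compat; lra).
  pose proof (exp_pos eps); nra.
Qed.

Lemma witness_window_gap : exists d, 0 < d /\
  forall N, 1 <= N -> d <= RInt (fun t => w 1 t - exp eps * w 2 t) (1 - N) (1 + N).
Proof.
  set (g t := (exp eps - 1) ^ 2 * w 2 t).
  assert (Hg : forall t, continuity_pt g t)
    by (intros; unfold g; reg; apply continuity_pt_witness_integrand).
  assert (Hphi : forall t, continuity_pt (fun t => w 1 t - exp eps * w 2 t) t)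
    by (intros; reg; apply continuity_pt_witness_integrand).
  assert (Hpsi : forall t, continuity_pt
            (fun t => (w 1 t - exp eps * w 2 t) + (w 1 (2 * 1 - t) - exp eps * w 2 (2 * 1 - t))) t)
    by (intros; reg; apply continuity_pt_witness_integrand).
  assert (Hlow : forall t, t <= 1 -> g t <=
            (w 1 t - exp eps * w 2 t) + (w 1 (2 * 1 - t) - exp eps * w 2 (2 * 1 - t)))
    by (intros t Ht; rewrite Rmult_1_r; apply witness_pair_lower, Ht).
  assert (Hgpos : forall t, 0 < g t).
  { intros t; apply Rmult_lt_0_compat; [| apply witness_integrand_bounds].
    pose proof (exp_ineq1 eps ltac:(lra)); apply pow_lt; lra. }
  exists (RInt g 0 1); split.
  { apply RInt_gt_0; [lra | intros; apply Hgpos |].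
    intros; apply continuity_pt_filterlim, Hg. }
  intros N HN; rewrite RInt_reflect_window by exact Hphi.
  eapply Rle_trans.
  - apply RInt_le; [lra | apply ex_RInt_continuity, Hg | apply ex_RInt_continuity, Hpsi |].
    intros t Ht; apply Hlow; lra.
  - apply RInt_le_RInt_subinterval; [exact Hpsi | | lra | lra | lra].
    intros t Ht; eapply Rle_trans; [left; apply Hgpos | apply Hlow; lra].
Qed.

End Gap.

End WitnessIntegrand.

Theorem lemma5 (eps : R) (k : nat) :
  0 < eps -> (2 <= k)%nat -> Nat.Even k ->
  exists (theta : R) (Q : list (nat -> bool)) (D D' : dataset),
    length Q = k /\ neighboring D D' /\
    forall lam : R, 0 < lam -> lam <= INR k / (4 * eps) ->
      exists (O : list bool) (pD pD' : R),
        svt_prob D Q theta lam O pD /\ svt_prob D' Q theta lam O pD' /\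
        pD > exp eps * pD'.
Proof.
  intros Heps _ [m ->].
  exists 1, (repeat (fun _ : nat => true) m ++ repeat (fun _ : nat => false) m),
    [0%nat], [0%nat; 0%nat].
  split; [rewrite length_app, !repeat_length; lia |].
  split; [exists 0%nat; left; apply Permutation_refl |].
  intros lam Hlam Hlk.
  assert (Hbudget : 2 * eps <= INR m / lam).
  { assert (H4 : lam * (4 * eps) <= INR (2 * m)) by (apply Rle_div_r; lra).
    rewrite mult_INR in H4; simpl in H4.
    apply (Rle_div_r (2 * eps) (INR m) lam Hlam); lra. }
  exists (repeat false m ++ repeat true m).
  unfold svt_prob; rewrite !svt_integrand_witness by exact Hlam.
  replace (INR (length [0%nat; 0%nat])) with 2 by (simpl; ring).
  destruct (improper_integral_witness lam m Hlam 1) as [pD HpD].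
  destruct (improper_integral_witness lam m Hlam 2) as [pD' HpD'].
  exists pD, pD'; split; [exact HpD | split; [exact HpD' |]].
  destruct (witness_window_gap lam m Hlam eps Heps Hbudget) as [d [Hd Hwindow]].
  pose proof (improper_integral_ge _ _ 1 d 1
                (improper_integral_minus_scal _ _ (exp eps) _ _ HpD HpD') Hwindow).
  lra.
Qed.
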